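(* Let $R$ be a binary relation on a set $A$. If $\mathbf{WN}(R)$, $\mathbf{UN}^{=}(R)$ and $\mathbf{RP}(R)$ hold, then there is no $R$-increasing sequence, i.e. for every $s:\mathbb{N}\to A$ it is not the case that $s(k)\to s(k+1)$ for all $k$. (Constructively.)
   Context: Work in constructive (intuitionistic) logic / Martin-Löf type theory without excluded middle or other axioms. Let $R$ be a binary relation on $A$; write $a\to b$ for $R\,a\,b$, $\to^*$ for its reflexive–transitive closure, $=_R$ for the equivalence relation generated by $R$, $\equiv$ for identity. $a\in\mathrm{NF}$ iff there is no $b$ with $a\to b$. $\mathbf{WN}(R)$: every $a$ has some $b\in\mathrm{NF}$ with $a\to^* b$. $\mathbf{UN}^{=}(R)$: for all $a,b\in\mathrm{NF}$, $a=_R b$ implies $a\equiv b$. A sequence $s:\mathbb{N}\to A$ is $R$-increasing if $s(k)\to s(k+1)$ for all $k$; it is bounded if there is $b$ with $s(i)\to^* b$ for all $i$. $\mathbf{RP}(R)$: for every bounded $R$-increasing sequence $s$ there is $i$ such that for all $x\in A$, $s(i)\to^* x$ implies $x\to^* s(i)$. *)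

From Stdlib Require Import Relations.

Section ARS.
Context {A : Type} (R : A -> A -> Prop).

Definition rstar : A -> A -> Prop := clos_refl_trans A R.
Definition conv : A -> A -> Prop := clos_refl_sym_trans A R.

Definition NF (a : A) : Prop := ~ (exists b, R a b).

Definition WN : Prop := forall a, exists b, NF b /\ rstar a b.

Definition UN_eq : Prop :=
  forall a b, NF a -> NF b -> conv a b -> a = b.

Definition increasing (s : nat -> A) : Prop := forall k, R (s k) (s (S k)).

Definition bounded (s : nat -> A) : Prop := exists b, forall i, rstar (s i) b.

Definition RP : Prop :=
  forall s : nat -> A, increasing s -> bounded s ->
    exists i, forall x, rstar (s i) x -> rstar x (s i).
End ARS.

From Stdlib Require Import Relations.

(* Under WN and UN=, every element of an increasing sequence reduces to the
   unique normal form of s 0, so the sequence is bounded.  RP then yields an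
   index i with s i ->* nf ->* s i; a normal form has no proper reducts, so
   s i is itself the normal form, contradicting s i -> s (i+1). *)

Section ARS.
Variables (A : Type) (R : A -> A -> Prop).

Lemma rstar_conv a b : rstar R a b -> conv R a b.
Proof. unfold rstar, conv; induction 1; eauto using clos_refl_sym_trans. Qed.

Lemma NF_rstar_eq a b : NF R a -> rstar R a b -> b = a.
Proof.
  intros Na Hab; apply clos_rt_rt1n in Hab; destruct Hab as [|x y z Hxy _]; auto.
  exfalso; apply Na; eauto.
Qed.

Lemma increasing_conv0 s : increasing R s -> forall i, conv R (s i) (s 0).
Proof.
  intros Hs; induction i as [|i IH]; [apply rst_refl|].
  eapply rst_trans; [apply rst_sym, rst_step, Hs | exact IH].
Qed.

Lemma WN_UN_eq_conv_NF_rstar :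
  WN R -> UN_eq R -> forall a n, NF R n -> conv R a n -> rstar R a n.
Proof.
  intros Hwn Hun a n Nn Han.
  destruct (Hwn a) as [m [Nm Ham]].
  replace n with m; [exact Ham|].
  apply Hun; auto.
  eapply rst_trans; [apply rst_sym, rstar_conv, Ham | exact Han].
Qed.

Lemma WN_UN_eq_increasing_bounded s :
  WN R -> UN_eq R -> increasing R s -> bounded R s.
Proof.
  intros Hwn Hun Hs.
  destruct (Hwn (s 0)) as [n [Nn Hn]].
  exists n; intro i.
  apply WN_UN_eq_conv_NF_rstar; auto.
  eapply rst_trans; [apply increasing_conv0, Hs | apply rstar_conv, Hn].
Qed.

End ARS.

Theorem theorem1p2p3 (A : Type) (R : A -> A -> Prop) :
  WN R -> UN_eq R -> RP R ->
  forall s : nat -> A, ~ (forall k, R (s k) (s (S k))).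
Proof.
  intros Hwn Hun Hrp s Hs.
  destruct (Hrp s Hs (WN_UN_eq_increasing_bounded _ _ s Hwn Hun Hs)) as [i Hi].
  destruct (Hwn (s i)) as [n [Nn Hin]].
  assert (Hni : s i = n) by exact (NF_rstar_eq _ _ _ _ Nn (Hi n Hin)).
  apply Nn; exists (s (S i)); rewrite <- Hni; apply Hs.
Qed.
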